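(* Let $\alpha,\beta$ be relatively prime positive integers, and let $n$ be a positive integer with $s=s(n)>2$. Then there exist unique integers $a,b,t$ satisfying the following: (i) $n=a g_t+\beta b g_{t-1}$; (ii) $t\ge 2$, $a\le (\beta-1)g_{t+1}+\alpha b$, and $b\le g_t$; (iii) $a-\alpha b-\ell g_{t+1}$ is not a positive multiple of $\beta$ for any integer $\ell\ge 0$. Further, for these integers: (1) the pair $(b,a)$ is $n$-good and $s=t+1$; (2) $|w_{s+1}(b,a)-\gamma n|=|\lambda^t(\gamma b-a)|\le 2\beta^{t+1}$; (3) a pair $(b',a')$ of positive integers is $n$-good if and only if $(b',a')=(b+k g_t,\ a-k\beta g_{t-1})$ for some integer $k\ge 0$; (4) with $a',b',k$ as in (3), $w_{s+1}(b',a')-w_{s+1}(b,a)=-k(-\beta)^{t}$.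
   Context: Fix relatively prime positive integers $\alpha,\beta$. For positive integers $a_1,a_2$, the $(\alpha,\beta)$-walk $w_k=w_k(a_1,a_2)$ is the sequence with $w_1=a_1$, $w_2=a_2$, and $w_{k+2}=\alpha w_{k+1}+\beta w_k$ for $k\ge1$. For a positive integer $n$, $s(n;a_1,a_2)$ is the (largest) index $s$ with $w_s(a_1,a_2)=n$, or $-\infty$ if there is none, and $s(n)=\max_{a_1,a_2\ge1}s(n;a_1,a_2)$. A pair $(a_1,a_2)$ with $a_1,a_2\ge1$ is called $n$-good if $s(n;a_1,a_2)=s(n)$. The sequence $g_k$ is defined by $g_1=1$, $g_2=\alpha$, $g_{k+2}=\alpha g_{k+1}+\beta g_k$ for $k\ge1$. Let $\gamma=\frac12(\alpha+\sqrt{\alpha^2+4\beta})$ and $\lambda=\frac12(\alpha-\sqrt{\alpha^2+4\beta})$. *)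

From mathcomp Require Import all_boot all_order all_algebra.
Set Implicit Arguments. Unset Strict Implicit. Unset Printing Implicit Defensive.
Import Order.TTheory GRing.Theory Num.Theory.
Local Open Scope ring_scope.

(* Pairs (w_{k+1}, w_{k+2}) of the (alpha,beta)-walk started at (a1,a2). *)
Fixpoint wpair (al be : nat) (a1 a2 : int) (k : nat) : int * int :=
  match k with
  | 0%N => (a1, a2)
  | k'.+1 => let p := wpair al be a1 a2 k' in
             (p.2, al%:Z * p.2 + be%:Z * p.1)
  end.

(* walk al be a1 a2 k = w_k(a1,a2); indices k >= 1 are the meaningful ones
   (w_1 = a1, w_2 = a2, w_{k+2} = al w_{k+1} + be w_k). *)
Definition walk (al be : nat) (a1 a2 : int) (k : nat) : int :=
  (wpair al be a1 a2 k.-1).1.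

Definition gseq (al be : nat) (k : nat) : int := walk al be 1 al%:Z k.

Definition is_walk_index (al be n : nat) (a1 a2 : int) (s : nat) : Prop :=
  (0 < s)%N /\ walk al be a1 a2 s = n%:Z /\
  forall k : nat, (0 < k)%N -> walk al be a1 a2 k = n%:Z -> (k <= s)%N.

Definition is_sn (al be n : nat) (s : nat) : Prop :=
  (exists a1 a2 : int, 0 < a1 /\ 0 < a2 /\ is_walk_index al be n a1 a2 s) /\
  forall (a1 a2 : int) (s' : nat), 0 < a1 -> 0 < a2 ->
    is_walk_index al be n a1 a2 s' -> (s' <= s)%N.

Definition n_good (al be n : nat) (a1 a2 : int) : Prop :=
  0 < a1 /\ 0 < a2 /\
  exists s : nat, is_sn al be n s /\ is_walk_index al be n a1 a2 s.

(* Since w_(k+2)(x, y) = y g_(k+1) + beta x g_k and g_(k+1) is coprime to beta g_k, the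
   pairs reaching n at a given index form one arithmetic progression
   (b + j g_(k+1), a - j beta g_k), with a unique representative 0 < b <= g_(k+1).
   One step of the walk maps (x, y) to (y, alpha y + beta x); read through that
   representative, "n is reached at index t + 2" becomes "a - alpha b - l g_(t+1) is a
   positive multiple of beta for some l >= 0", which is condition (iii).  Walks increase
   strictly from their second term, so s(n) is the last index at which n is reached:
   this gives existence and uniqueness of (a, b, t) and the description of the n-good
   pairs, while choosing l = (a - alpha b) / g_(t+1) mod beta bounds a.  Cassini's
   identity for g gives (4), and w_(k+2) - gamma w_(k+1) = lambda^k (w_2 - gamma w_1)
   with |lambda|^k g_(k+1) <= beta^k gives (2). *)

From mathcomp Require Import all_boot all_order all_algebra.
From mathcomp Require Import ring lra zify.
Import Order.TTheory GRing.Theory Num.Theory.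
Set Implicit Arguments.
Unset Strict Implicit.
Unset Printing Implicit Defensive.

Local Open Scope ring_scope.

Definition pos_multiple (d : nat) (z : int) : Prop := exists m : int, 0 < m /\ z = d%:Z * m.

Lemma exists_pos_multiple_sub_mul (d : nat) (c G : int) :
  (0 < d)%N -> 0 < G -> coprimez G d -> (d%:Z - 1) * G < c ->
  exists l : nat, pos_multiple d (c - l%:Z * G).
Proof.
move=> d_gt0 G_gt0 /eqP coGd lt_c.
have [u [v uv]] := Bezoutz G d; rewrite coGd in uv.
have d_gt0' : 0 < d%:Z by rewrite ltz_nat.
(* l is c / G modulo d. *)
set l := ((c * u) %% d)%Z; set q := ((c * u) %/ d)%Z.
have l_ge0 : 0 <= l by rewrite modz_ge0 // lt0r_neq0.
have eq_m : c - l * G = d%:Z * (c * v + q * G).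
  have -> : l = c * u - q * d%:Z by rewrite /l /q; lia.
  by rewrite -{1}[c]mulr1 -uv; ring.
exists `|l|%N, (c * v + q * G); rewrite gez0_abs //; split=> //.
by rewrite -(pmulr_rgt0 _ d_gt0') -eq_m; nia.
Qed.

(* [lucasU al be k] is g_k for k >= 1, extended by g_0 = 0 (unlike [gseq], whose value
   at 0 is 1). *)
Definition lucasU (al be : nat) (k : nat) : int := (wpair al be 0 1 k).1.

Definition reachable (al be n : nat) (k : nat) : Prop :=
  exists x y : int, [/\ 0 < x, 0 < y & walk al be x y k = n%:Z].

(* Conditions (i), (iii) and b <= g_t of the theorem, for t = u.+1. *)
Definition reduced_repr (al be n : nat) (a b : int) (u : nat) : Prop :=
  [/\ 0 < a, 0 < b, walk al be b a u.+2 = n%:Z, b <= lucasU al be u.+1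
    & forall l : nat, ~ pos_multiple be (a - al%:Z * b - l%:Z * lucasU al be u.+2)].

Section Walks.

Context {al be : nat}.
Local Notation U := (lucasU al be).

Lemma lucasUSS k : U k.+2 = al%:Z * U k.+1 + be%:Z * U k.
Proof. by []. Qed.

Lemma walkSSS (x y : int) k :
  walk al be x y k.+3 = al%:Z * walk al be x y k.+2 + be%:Z * walk al be x y k.+1.
Proof. by []. Qed.

Lemma wpairD (x y : int) i j :
  wpair al be x y (i + j) = wpair al be (wpair al be x y i).1 (wpair al be x y i).2 j.
Proof. by elim: j => [|j IH]; rewrite ?addn0 ?addnS /= ?IH //; case: wpair. Qed.

Lemma walkD (x y : int) i j :
  walk al be x y (i + j.+1) = walk al be (wpair al be x y i).1 (wpair al be x y i).2 j.+1.
Proof. by rewrite /walk addnS /= wpairD. Qed.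

Lemma walkS (x y : int) k :
  walk al be x y k.+2 = walk al be y (al%:Z * y + be%:Z * x) k.+1.
Proof. exact: (walkD x y 1 k). Qed.

Lemma walk_lucas (x y : int) k :
  walk al be x y k.+2 = y * U k.+1 + be%:Z * x * U k.
Proof.
elim: k x y => [|k IH] x y; first by rewrite /walk /lucasU /=; ring.
rewrite walkS IH !lucasUSS; ring.
Qed.

Lemma gseq_lucas k : gseq al be k.+1 = U k.+1.
Proof. by case: k => [|k] //; rewrite /gseq walk_lucas /= lucasUSS; ring. Qed.

Lemma lucas_cassini k : U k.+1 ^+ 2 - U k * U k.+2 = (- be%:Z) ^+ k.
Proof.
elim: k => [|k IH]; first by rewrite /lucasU /= expr0; ring.
by rewrite [(- _) ^+ _.+1]exprS -IH !lucasUSS; ring.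
Qed.

Lemma walk_progression (a b j : int) u :
  walk al be (b + j * U u.+1) (a - j * be%:Z * U u) u.+2 = walk al be b a u.+2.
Proof. by rewrite !walk_lucas; ring. Qed.

Lemma walk_progression_next (a b j : int) u :
  walk al be (b + j * U u.+1) (a - j * be%:Z * U u) u.+3 =
  walk al be b a u.+3 - j * (- be%:Z) ^+ u.+1.
Proof. by rewrite !walk_lucas exprS -lucas_cassini; ring. Qed.

Hypothesis al_gt0 : (0 < al)%N.

Lemma wpair_gt0 (x y : int) k : 0 < x -> 0 < y ->
  0 < (wpair al be x y k).1 /\ 0 < (wpair al be x y k).2.
Proof.
move=> x_gt0 y_gt0; elim: k => [|k [IH1 IH2]] //=; split=> //.
have : 0 < al%:Z * (wpair al be x y k).2 by rewrite mulr_gt0 // ltz_nat.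
have : 0 <= be%:Z * (wpair al be x y k).1 by rewrite mulr_ge0 // ltW.
lra.
Qed.

Lemma walk_gt0 (x y : int) k : 0 < x -> 0 < y -> 0 < walk al be x y k.
Proof. by move=> x_gt0 y_gt0; case: (wpair_gt0 k.-1 x_gt0 y_gt0). Qed.

Lemma lucasU_gt0 k : 0 < U k.+1.
Proof. by rewrite -gseq_lucas walk_gt0 // ltz_nat. Qed.

Lemma lucasU_ge0 k : 0 <= U k.
Proof. by case: k => [|k] //; rewrite ltW // lucasU_gt0. Qed.

Lemma walk_reduce (x y : int) u : 0 < x -> 0 < y ->
  exists b a : int, [/\ 0 < b, b <= U u.+1, 0 < a & walk al be b a u.+2 = walk al be x y u.+2].
Proof.
move=> x_gt0 y_gt0; have U_gt0 := lucasU_gt0 u; have U_ge0 := lucasU_ge0 u.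
set q := ((x - 1) %/ U u.+1)%Z.
have q_ge0 : 0 <= q by rewrite divz_ge0 // subr_ge0.
exists (x + (- q) * U u.+1), (y - (- q) * be%:Z * U u); rewrite walk_progression.
split=> //; nia.
Qed.

Lemma unreachable_above (n : nat) k j :
  ~ reachable al be n k.+1 -> (k.+1 <= j)%N -> ~ reachable al be n j.
Proof.
move=> unreach le_kj [x [y [x_gt0 y_gt0]]].
rewrite -(subnK le_kj) walkD => wn.
have [p1_gt0 p2_gt0] := wpair_gt0 (j - k.+1) x_gt0 y_gt0.
by apply: unreach; do 2!eexists; split; last exact: wn.
Qed.

Lemma walk_index_of_unreachable (n : nat) (x y : int) k :
  0 < x -> 0 < y -> (0 < k)%N -> walk al be x y k = n%:Z ->
  ~ reachable al be n k.+1 -> is_walk_index al be n x y k.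
Proof.
move=> x_gt0 y_gt0 k_gt0 wn unreach; split=> //; split=> // j _ wjn.
rewrite leqNgt; apply/negP => lt_kj.
by apply: (unreachable_above unreach lt_kj); exists x, y.
Qed.

Lemma is_sn_of_unreachable (n : nat) k : (0 < k)%N ->
  reachable al be n k -> ~ reachable al be n k.+1 -> is_sn al be n k.
Proof.
move=> k_gt0 [x [y [x_gt0 y_gt0 wn]]] unreach; split.
  by exists x, y; split; [|split; last exact: walk_index_of_unreachable].
move=> x' y' j x'_gt0 y'_gt0 [j_gt0 [wjn _]]; rewrite leqNgt; apply/negP => lt_kj.
by apply: (unreachable_above unreach lt_kj); exists x', y'.
Qed.

Lemma is_sn_uniq (n : nat) s s' : is_sn al be n s -> is_sn al be n s' -> s = s'.
Proof.
move=> [[x [y [x_gt0 [y_gt0 ixy]]]] max_s] [[x' [y' [x'_gt0 [y'_gt0 ixy']]]] max_s'].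
by apply/eqP; rewrite eqn_leq (max_s' _ _ _ x_gt0 y_gt0 ixy) (max_s _ _ _ x'_gt0 y'_gt0 ixy').
Qed.

Hypothesis coprime_al_be : coprime al be.

Lemma coprimez_lucasU k : coprimez (U k.+1) (be%:Z * U k).
Proof.
elim: k => [|k IH]; first by rewrite mulr0 /coprimez gcdz0.
move: IH; rewrite !coprimezMr => /andP[coUbe coUU]; apply/andP; split.
  rewrite coprimez_sym /coprimez lucasUSS addrC [be%:Z * _]mulrC gcdzMDl.
  rewrite Gauss_gcdzr; first by rewrite -/(coprimez _ _) coprimez_sym.
  by rewrite coprimezE !absz_nat coprime_sym.
by rewrite coprimez_sym /coprimez (lucasUSS k) gcdzMDl -/(coprimez _ _) coprimezMr coUbe.
Qed.

Lemma eq_walk_progression (a b a' b' : int) u :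
  walk al be b' a' u.+2 = walk al be b a u.+2 ->
  exists j : int, b' = b + j * U u.+1 /\ a' = a - j * be%:Z * U u.
Proof.
rewrite !walk_lucas => eq_ab.
have U_gt0 := lucasU_gt0 u.
have dvd_eq : be%:Z * U u * (b' - b) = U u.+1 * (a - a') by lia.
have : (U u.+1 %| be%:Z * U u * (b' - b))%Z by rewrite dvd_eq dvdz_mulr.
rewrite Gauss_dvdzr ?coprimez_lucasU // => /dvdzP [j eq_b].
exists j; split; first by rewrite -eq_b; ring.
apply: (mulfI (lt0r_neq0 U_gt0)).
by move: dvd_eq; rewrite eq_b; lia.
Qed.

Lemma reachable_next_iff (n : nat) (a b : int) u :
  0 < b -> b <= U u.+1 -> walk al be b a u.+2 = n%:Z ->
  reachable al be n u.+3 <-> exists l : nat, pos_multiple be (a - al%:Z * b - l%:Z * U u.+2).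
Proof.
move=> b_gt0 le_bU wn; have U_gt0 := lucasU_gt0 u; split.
  move=> [x [y [x_gt0 y_gt0]]]; rewrite walkS -wn.
  move=> /eq_walk_progression [j [eq_y eq_a]].
  have j_ge0 : 0 <= j by nia.
  exists `|j|%N, x; rewrite gez0_abs //; split=> //.
  by move: eq_a; rewrite eq_y lucasUSS; lia.
move=> [l [m [m_gt0 eq_m]]]; exists m, (b + l%:Z * U u.+1); split=> //; first nia.
by rewrite -wn !walk_lucas -eq_m (lucasUSS u); ring.
Qed.

Lemma is_sn_of_reduced_repr (n : nat) (a b : int) u :
  reduced_repr al be n a b u -> is_sn al be n u.+2.
Proof.
move=> [a_gt0 b_gt0 wn le_bU no_tail].
apply: is_sn_of_unreachable => //; first by exists b, a.
by move/(reachable_next_iff b_gt0 le_bU wn) => [l tail]; apply: (no_tail l).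
Qed.

Lemma reduced_repr_uniq (n : nat) (a b a' b' : int) u u' :
  reduced_repr al be n a b u -> reduced_repr al be n a' b' u' -> [/\ a' = a, b' = b & u' = u].
Proof.
move=> rab rab'; have [_ b_gt0 wn le_bU _] := rab; have [_ b'_gt0 wn' le_b'U _] := rab'.
case: (is_sn_uniq (is_sn_of_reduced_repr rab) (is_sn_of_reduced_repr rab')) => eq_u.
subst u'; have [j [eq_b eq_a]] := eq_walk_progression (etrans wn' (esym wn)).
have U_gt0 := lucasU_gt0 u; have j0 : j = 0 by nia.
by rewrite eq_b eq_a j0 !mul0r addr0 subr0.
Qed.

Hypothesis be_gt0 : (0 < be)%N.

Lemma walk_ltS (x y : int) k : 0 < x -> 0 < y ->
  walk al be x y k.+2 < walk al be x y k.+3.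
Proof.
move=> x_gt0 y_gt0; rewrite walkSSS.
have w2_ge0 := ltW (walk_gt0 k.+2 x_gt0 y_gt0).
have : walk al be x y k.+2 <= al%:Z * walk al be x y k.+2 by rewrite ler_peMl // lez_nat.
have : 0 < be%:Z * walk al be x y k.+1 by rewrite mulr_gt0 ?walk_gt0 // ltz_nat.
lra.
Qed.

Lemma walk_index_last (n : nat) (x y : int) k : 0 < x -> 0 < y ->
  walk al be x y k.+2 = n%:Z -> is_walk_index al be n x y k.+2.
Proof.
move=> x_gt0 y_gt0 wn; split=> //; split=> // [[|[|j]]] // _ wjn.
rewrite leqNgt; apply/negP => lt_kj.
have mono : {homo (fun i => walk al be x y i.+2) : i j / (i < j)%N >-> i < j}.
  by apply: homo_ltn => [? ? ? /lt_trans|i]; [exact | exact: walk_ltS].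
by move: (mono k j lt_kj); rewrite /= wn wjn ltxx.
Qed.

Lemma sn_unreachable (n : nat) s : (0 < s)%N -> is_sn al be n s -> ~ reachable al be n s.+1.
Proof.
case: s => [|s] // _ [_ max_s] [x [y [x_gt0 y_gt0 wn]]].
by have := max_s _ _ _ x_gt0 y_gt0 (walk_index_last x_gt0 y_gt0 wn); rewrite ltnn.
Qed.

Lemma n_good_iff (n : nat) s (x y : int) : (0 < s)%N -> is_sn al be n s ->
  n_good al be n x y <-> [/\ 0 < x, 0 < y & walk al be x y s = n%:Z].
Proof.
move=> s_gt0 sn_s; split.
  move=> [x_gt0 [y_gt0 [s' [sn_s' [_ [wn _]]]]]].
  by rewrite (is_sn_uniq sn_s sn_s') in wn *.
move=> [x_gt0 y_gt0 wn]; split=> //; split=> //; exists s; split=> //.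
exact: walk_index_of_unreachable (sn_unreachable s_gt0 sn_s).
Qed.

Lemma exists_reduced_repr (n : nat) u :
  is_sn al be n u.+2 -> exists a b : int, reduced_repr al be n a b u.
Proof.
move=> sn_u; have [[x [y [x_gt0 [y_gt0 [_ [wxy _]]]]]] _] := sn_u.
have [b [a [b_gt0 le_bU a_gt0 wba]]] := walk_reduce u x_gt0 y_gt0.
rewrite wxy in wba; exists a, b; split=> // l tail.
apply: (sn_unreachable (ltn0Sn _) sn_u).
by apply/(reachable_next_iff b_gt0 le_bU wba); exists l.
Qed.

Lemma reduced_repr_le (n : nat) (a b : int) u :
  reduced_repr al be n a b u -> a <= (be%:Z - 1) * U u.+2 + al%:Z * b.
Proof.
move=> [_ _ _ _ no_tail]; rewrite -lerBlDr leNgt; apply/negP.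
have := coprimez_lucasU u.+1; rewrite coprimezMr => /andP[coUbe _].
move=> /(exists_pos_multiple_sub_mul be_gt0 (lucasU_gt0 u.+1) coUbe) [l].
exact: no_tail.
Qed.

Lemma n_good_progression (n : nat) (a b a' b' : int) u :
  reduced_repr al be n a b u -> 0 < b' -> 0 < a' ->
  n_good al be n b' a' <->
  exists k : nat, b' = b + k%:Z * U u.+1 /\ a' = a - k%:Z * be%:Z * U u.
Proof.
move=> rab b'_gt0 a'_gt0; have [_ b_gt0 wn le_bU _] := rab.
rewrite (n_good_iff _ _ (ltn0Sn _) (is_sn_of_reduced_repr rab)).
split=> [[_ _ wn'] | [k [eq_b eq_a]]].
  have [j [eq_b eq_a]] := eq_walk_progression (etrans wn' (esym wn)).
  have U_gt0 := lucasU_gt0 u; have j_ge0 : 0 <= j by nia.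
  by exists `|j|%N; rewrite gez0_abs.
by split=> //; rewrite eq_b eq_a walk_progression wn.
Qed.

End Walks.

Section RootIdentities.

Variables (al be : nat) (R : comPzRingType) (gam lam : R).
Hypotheses (sum_roots : gam + lam = al%:R) (prod_roots : gam * lam = - be%:R).

Lemma walk_sub_root (x y : int) k :
  (walk al be x y k.+2)%:~R - gam * (walk al be x y k.+1)%:~R =
  lam ^+ k * (y%:~R - gam * x%:~R).
Proof.
elim: k => [|k IH]; first by rewrite expr0 mul1r.
rewrite walkSSS intrD !intrM -!pmulrn exprS -mulrA -IH -sum_roots.
by rewrite -[be%:R]opprK -prod_roots; ring.
Qed.

Lemma lucasU_sub_root k : (lucasU al be k.+1)%:~R - gam * (lucasU al be k)%:~R = lam ^+ k.
Proof. by have := walk_sub_root 0 1 k; rewrite mulr0 subr0 mulr1. Qed.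

End RootIdentities.

Lemma lucasU_binet al be (R : comPzRingType) (gam lam : R) :
  gam + lam = al%:R -> gam * lam = - be%:R ->
  forall k, (gam - lam) * (lucasU al be k)%:~R = gam ^+ k - lam ^+ k.
Proof.
move=> sum_roots prod_roots k.
have sum' : lam + gam = al%:R by rewrite addrC.
have prod' : lam * gam = - be%:R by rewrite mulrC.
rewrite -(lucasU_sub_root sum_roots prod_roots k) -(lucasU_sub_root sum' prod' k); ring.
Qed.

Section RootBound.

Variables (al be : nat) (R : realFieldType) (gam lam : R).
Hypotheses (sum_roots : gam + lam = al%:R) (prod_roots : gam * lam = - be%:R).
Hypotheses (lam_le0 : lam <= 0) (al_gt0 : (0 < al)%N) (be_gt0 : (0 < be)%N).
Local Notation U := (lucasU al be).

Lemma lucasU_root_bound k : (- lam) ^+ k * (U k.+1)%:~R <= be%:R ^+ k.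
Proof.
have mu_ge0 : 0 <= - lam by rewrite oppr_ge0.
have mu_gam : - lam * gam = be%:R by rewrite mulNr mulrC prod_roots opprK.
have mu_le_gam : - lam <= gam by have := ler0n R al; rewrite -sum_roots; lra.
have gam_gt0 : 0 < gam.
  have : 0 < - lam * gam by rewrite mu_gam ltr0n.
  nra.
have r_gt0 : 0 < gam - lam by lra.
have mu2_le : - lam * - lam <= be%:R by rewrite -mu_gam ler_wpM2l.
(* After multiplying by gam - lam (Binet), the gam^(k+1) term contributes be^k gam, and the
   lam^(k+1) term at most |lam|^(2k+1) <= be^k (- lam). *)
rewrite -(ler_pM2l r_gt0) mulrCA lucasU_binet //.
have gam_part : (- lam) ^+ k * gam ^+ k.+1 = be%:R ^+ k * gam.
  by rewrite exprS mulrCA -exprMn mu_gam mulrC.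
have lam_part : - ((- lam) ^+ k * lam ^+ k.+1) <= (- lam * - lam) ^+ k * - lam.
  apply: le_trans (ler_norm _) _.
  rewrite normrN normrM !normrX normrN ler0_norm // exprS exprMn.
  by rewrite mulrCA mulrC.
have mu2k_le : (- lam * - lam) ^+ k <= be%:R ^+ k.
  by rewrite lerXn2r // nnegrE ?ler0n // mulr_ge0.
rewrite mulrBr gam_part; nra.
Qed.

Lemma root_dist_bound (a b : int) k :
  0 <= a -> 0 <= b -> b <= U k.+1 -> a <= (be%:Z - 1) * U k.+2 + al%:Z * b ->
  `|lam ^+ k.+1 * (gam * b%:~R - a%:~R)| <= be%:R ^+ k.+2.
Proof.
rewrite -!(ler_int R) intrD !intrM intrB -!pmulrn => a_ge0 b_ge0 le_bU le_a.
set A := a%:~R in a_ge0 le_a *; set B := b%:~R in b_ge0 le_bU le_a *.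
have mu_ge0 : 0 <= - lam by rewrite oppr_ge0.
have mu_gam : - lam * gam = be%:R by rewrite mulNr mulrC prod_roots opprK.
have al_le_gam : al%:R <= gam by rewrite -sum_roots gerDl.
have gam_ge0 : 0 <= gam := le_trans (ler0n R al) al_le_gam.
have U2_ge0 : 0 <= (U k.+2)%:~R :> R by rewrite ler0z lucasU_ge0.
have be_ge1 : 1 <= be%:R :> R by rewrite ler1n.
have bound1 := lucasU_root_bound k; have bound2 := lucasU_root_bound k.+1.
rewrite normrM normrX (ler0_norm lam_le0) !exprS; rewrite !exprS in bound2.
set P := (- lam) ^+ k in bound1 bound2 *; set E := be%:R ^+ k in bound1 bound2 *.
have muP_ge0 : 0 <= - lam * P by rewrite mulr_ge0 // exprn_ge0.
have E_ge0 : 0 <= E by rewrite exprn_ge0.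
case: (lerP A (gam * B)) => [le_A | lt_A].
  have le_X : gam * B - A <= gam * (U k.+1)%:~R by nra.
  apply: le_trans (ler_wpM2l muP_ge0 le_X) _.
  have -> : - lam * P * (gam * (U k.+1)%:~R) = be%:R * (P * (U k.+1)%:~R).
    by rewrite -mu_gam; ring.
  apply: (le_trans (ler_wpM2l (ler0n R be) bound1)).
  by rewrite ler_pM2l ?ltr0n // ler_peMl.
have le_X : A - gam * B <= be%:R * (U k.+2)%:~R by nra.
apply: le_trans (ler_wpM2l muP_ge0 le_X) _.
have -> : - lam * P * (be%:R * (U k.+2)%:~R) = be%:R * (- lam * P * (U k.+2)%:~R) by ring.
by rewrite ler_wpM2l.
Qed.

End RootBound.

Lemma char_roots (R : rcfType) (al be : nat) (gam lam : R) :
  gam = (al%:R + Num.sqrt ((al ^ 2 + 4 * be)%:R)) / 2 ->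
  lam = (al%:R - Num.sqrt ((al ^ 2 + 4 * be)%:R)) / 2 ->
  [/\ gam + lam = al%:R, gam * lam = - be%:R & lam <= 0].
Proof.
set r := Num.sqrt _ => -> ->.
have r_ge0 : 0 <= r := sqrtr_ge0 _.
have r2 : r ^+ 2 = al%:R ^+ 2 + 4 * be%:R by rewrite sqr_sqrtr ?ler0n // natrD natrM natrX.
have al_le_r : al%:R <= r by have := ler0n R be; have := ler0n R al; nra.
split; last by lra.
  by field.
have -> : (al%:R + r) / 2 * ((al%:R - r) / 2) = (al%:R ^+ 2 - r ^+ 2) / 4 :> R by field.
by rewrite r2; field.
Qed.

Theorem theorem1p1 (R : rcfType) (al be n s : nat) :
  (0 < al)%N -> (0 < be)%N -> coprime al be -> (0 < n)%N ->
  is_sn al be n s -> (2 < s)%N ->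
  let g := gseq al be in
  let w := walk al be in
  let gam : R := (al%:R + Num.sqrt ((al ^ 2 + 4 * be)%:R)) / 2 in
  let lam : R := (al%:R - Num.sqrt ((al ^ 2 + 4 * be)%:R)) / 2 in
  let P := fun (a b : int) (t : nat) =>
    [/\ 0 < a, 0 < b,
        n%:Z = a * g t + be%:Z * b * g t.-1,
        [/\ (2 <= t)%N, a <= (be%:Z - 1) * g t.+1 + al%:Z * b & b <= g t]
      & forall l : nat, ~ (exists m : int,
          0 < m /\ a - al%:Z * b - l%:Z * g t.+1 = be%:Z * m)] in
  exists (a b : int) (t : nat),
    P a b t /\
    (forall (a' b' : int) (t' : nat), P a' b' t' -> [/\ a' = a, b' = b & t' = t]) /\
    (* (1) *)
    (n_good al be n b a /\ s = t.+1) /\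
    (* (2) *)
    (`|(w b a s.+1)%:~R - gam * n%:R| = `|lam ^+ t * (gam * b%:~R - a%:~R)| /\
     `|lam ^+ t * (gam * b%:~R - a%:~R)| <= 2 * be%:R ^+ t.+1) /\
    (* (3) *)
    (forall b' a' : int, 0 < b' -> 0 < a' ->
       (n_good al be n b' a' <->
        exists k : nat, b' = b + k%:Z * g t /\ a' = a - k%:Z * be%:Z * g t.-1)) /\
    (* (4) *)
    (forall (b' a' : int) (k : nat), 0 < b' -> 0 < a' ->
       b' = b + k%:Z * g t -> a' = a - k%:Z * be%:Z * g t.-1 ->
       w b' a' s.+1 - w b a s.+1 = - (k%:Z * (- be%:Z) ^+ t)).
Proof.
move=> al_gt0 be_gt0 coprime_al_be _ sn_s s_gt2; cbv zeta.
case: s s_gt2 sn_s => [|[|[|u]]] // _ sn_s.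
have [a [b rab]] := exists_reduced_repr al_gt0 coprime_al_be be_gt0 sn_s.
have [a_gt0 b_gt0 wba le_bU no_tail] := rab.
have le_a := reduced_repr_le al_gt0 coprime_al_be be_gt0 rab.
exists a, b, u.+2; rewrite !gseq_lucas /=.
split; first by split=> //; rewrite -wba walk_lucas.
split.
  move=> a' b' t' [a'_gt0 b'_gt0 n_eq [t'_gt1 _ le_b'U] no_tail'].
  case: t' t'_gt1 n_eq le_b'U no_tail' => [|[|u']] // _ n_eq le_b'U no_tail'.
  rewrite /= !gseq_lucas in n_eq le_b'U no_tail'; rewrite -walk_lucas in n_eq.
  have rab' := And5 a'_gt0 b'_gt0 (esym n_eq) le_b'U no_tail'.
  by have [-> -> ->] := reduced_repr_uniq al_gt0 coprime_al_be rab rab'.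
split.
  split=> //; apply/(n_good_progression al_gt0 coprime_al_be be_gt0 rab b_gt0 a_gt0).
  by exists 0%N; rewrite !mul0r addr0 subr0.
split.
  set gam : R := (al%:R + _) / 2; set lam : R := (al%:R - _) / 2.
  have [sum_roots prod_roots lam_le0] := char_roots (erefl gam) (erefl lam).
  have -> : n%:R = (walk al be b a u.+3)%:~R :> R by rewrite wba.
  split; first by rewrite (walk_sub_root sum_roots prod_roots) -normrN -mulrN opprB.
  apply: le_trans (root_dist_bound sum_roots prod_roots lam_le0 al_gt0 be_gt0
    (ltW a_gt0) (ltW b_gt0) le_bU le_a) _.
  by rewrite ler_peMl ?exprn_ge0 ?ler0n // ler1n.
split; first by move=> b' a'; apply: n_good_progression.
by move=> b' a' k _ _ -> ->; rewrite walk_progression_next; ring.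
Qed.
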